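(* Fix $\phi\in\mathbb{R}^d$ with $\mu=\|\phi\|^2>0$, a one-hot label ${\bm y}\in\{0,1\}^V$, and let $f({\bm z},{\bm y})=-\sum_k y_k\log p_k({\bm z})$ with ${\bm p}({\bm z})=\mathrm{softmax}({\bm z})$. Let $\kappa\ge0$, $|\eta|\in(0,1]$, $|\rho|\le\kappa\sqrt{|\eta|}$. Given ${\bm W}^t\in\mathbb{R}^{V\times d}$, let ${\bm z}^t={\bm W}^t\phi$, ${\bm p}^t={\bm p}({\bm z}^t)$, ${\bm g}^t={\bm p}^t-{\bm y}$, ${\bm H}^t_{{\bm z}}=\mathrm{diag}({\bm p}^t)-{\bm p}^t({\bm p}^t)^\top$, and let ${\bm W}^{t+1}$ be obtained by one SAM step: with $F({\bm W})=f({\bm W}\phi,{\bm y})$, $\widetilde{{\bm W}}^t={\bm W}^t+\rho\nabla F({\bm W}^t)/\|\nabla F({\bm W}^t)\|$ (perturbation $0$ if ${\bm g}^t=0$) and ${\bm W}^{t+1}={\bm W}^t-\eta\nabla F(\widetilde{{\bm W}}^t)$; let ${\bm g}^{t+1}={\bm p}({\bm W}^{t+1}\phi)-{\bm y}$, and $\tilde\rho^{\,t}=\rho\sqrt\mu/\|{\bm g}^t\|$ (with $\tilde\rho^{\,t}=0$ if ${\bm g}^t=0$). Let ${\bm H}^t_{{\bm z}}=\sum_{k=1}^{V-1}\lambda_k^t{\bm v}_k^t({\bm v}_k^t)^\top$ be a spectral decomposition with $\lambda_k^t>0$ and $({\bm v}_k^t)^\top{\bm v}_\ell^t=\delta_{k\ell}$,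 and define $e_k^t=({\bm v}_k^t)^\top{\bm g}^t$ for $k=1,\dots,V-1$. Then there exists a constant $C>0$ (depending only on $V,\mu,\kappa$) such that for all $k=1,\dots,V-1$, $$({\bm v}_k^t)^\top{\bm g}^{t+1}=\Big(1-\eta\mu\big[\lambda_k^t+\tilde\rho^{\,t}(\lambda_k^t)^2\big]\Big)e_k^t+r_k^t,\qquad |r_k^t|\le C\eta^2.$$
   Context: $\|\cdot\|$ is the Euclidean norm on vectors and Frobenius norm on matrices. The gradient in ${\bm W}$ is $\nabla F({\bm W})=(\nabla_{\bm z} f({\bm W}\phi,{\bm y}))\phi^\top$. *)

From HB Require Import structures.
From mathcomp Require Import all_boot all_order all_algebra.
From mathcomp Require Import all_classical all_reals all_analysis.
Set Implicit Arguments. Unset Strict Implicit. Unset Printing Implicit Defensive.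
Import Order.TTheory GRing.Theory Num.Theory.
Local Open Scope ring_scope.

Section SAM.
Variable R : realType.

Definition vnorm (n : nat) (x : 'cV[R]_n) : R :=
  Num.sqrt (\sum_(i < n) x i ord0 ^+ 2).

Definition frob (m n : nat) (A : 'M[R]_(m, n)) : R :=
  Num.sqrt (\sum_(i < m) \sum_(j < n) A i j ^+ 2).

Definition softmax (V : nat) (z : 'cV[R]_V) : 'cV[R]_V :=
  \col_(k < V) (expR (z k ord0) / \sum_(j < V) expR (z j ord0)).

Definition xent (V : nat) (z y : 'cV[R]_V) : R :=
  - \sum_(k < V) y k ord0 * ln (softmax z k ord0).

Definition onehot (V : nat) (y : 'cV[R]_V) : Prop :=
  exists c : 'I_V, y = delta_mx c ord0.

Definition grad_z (V : nat) (y z : 'cV[R]_V) : 'cV[R]_V :=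
  \col_(k < V) derive1 (fun s : R => xent (z + s *: delta_mx k ord0) y) 0.

(* F(W) = f(W phi, y); its gradient  (grad_z f(W phi, y)) phi^T *)
Definition gradF (V d : nat) (phi : 'cV[R]_d) (y : 'cV[R]_V)
  (W : 'M[R]_(V, d)) : 'M[R]_(V, d) :=
  grad_z y (W *m phi) *m phi^T.

Definition gvec (V d : nat) (phi : 'cV[R]_d) (y : 'cV[R]_V)
  (W : 'M[R]_(V, d)) : 'cV[R]_V :=
  softmax (W *m phi) - y.

Definition sam_step (V d : nat) (phi : 'cV[R]_d) (y : 'cV[R]_V)
  (eta rho : R) (W : 'M[R]_(V, d)) : 'M[R]_(V, d) :=
  let Wt := W + (if gvec phi y W == 0 then 0
                 else (rho / frob (gradF phi y W)) *: gradF phi y W) in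
  W - eta *: gradF phi y Wt.

Definition Hz (V : nat) (z : 'cV[R]_V) : 'M[R]_V :=
  diag_mx (softmax z)^T - softmax z *m (softmax z)^T.

End SAM.

From HB Require Import structures.
From mathcomp Require Import all_boot all_order all_algebra.
From mathcomp Require Import all_classical all_reals all_analysis.
From mathcomp Require Import ring lra.
Import Order.TTheory GRing.Theory Num.Theory.
Local Open Scope ring_scope.
Set Implicit Arguments. Unset Strict Implicit. Unset Printing Implicit Defensive.

(* With a one-hot label the logit gradient is [g = p(z) - y], so
   [grad F(W) = g phi^T] and a SAM step acts on the logits [z = W phi] as
   [z' = z - eta mu (p(z + rhot g) - y)]: the normalised weight perturbation
   becomes the logit perturbation [rhot g], whose entries are at most
   [|rho| sqrt mu].  Linearising the softmax, [p(z + d) = p(z) + H_z d + r(d)]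
   with [|r(d)_i| <= K(B) |d|_oo^2] whenever [|d|_oo <= B], and applying
   [v_k^T H_z = lam_k v_k^T] twice gives the main term
   [(1 - eta mu (lam_k + rhot lam_k^2)) e_k] up to [eta mu lam_k v_k^T r(rhot g)]
   and [v_k^T r(z' - z)].  As [lam_k <= v_k^T diag(p) v_k <= 1],
   [rho^2 <= kappa^2 |eta|] and [|z' - z|_oo <= |eta| mu], both are [O(eta^2)]. *)

Section RealInequalities.
Variable R : realType.

Lemma expR_remainder_le (x D B : R) :
  `|x| <= D -> D <= B -> `|expR x - 1 - x| <= expR B * D ^+ 2.
Proof.
move=> x_le DB; have D_ge0 : 0 <= D := le_trans (normr_ge0 x) x_le.
apply: le_trans (_ : _ <= expR `|x| * x ^+ 2) _; last first.
  rewrite ler_pM ?expR_ge0 ?sqr_ge0 ?ler_expR ?(le_trans x_le) //.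
  by rewrite -real_normK ?num_real // lerXn2r ?nnegrE.
have rem_ge0 : 0 <= expR x - 1 - x by have := expR_ge1Dx x; lra.
rewrite ger0_norm //.
have [x_ge|x_lt] := lerP (-1) x.
- apply: le_trans (_ : _ <= expR x * x ^+ 2) _.
    (* [e^x (1 - x^2) <= 1 + x] since [1 - x <= e^{-x}]. *)
    have e_inv : expR x * expR (- x) = 1 by rewrite -expRD subrr expR0.
    have quad_le : (1 + x) * (1 - x) <= (1 + x) * expR (- x).
      by apply: ler_wpM2l; [lra | have := expR_ge1Dx (- x); lra].
    have := ler_wpM2l (ltW (expR_gt0 x)) quad_le.
    by rewrite [X in _ <= X]mulrCA e_inv mulr1; nra.
  by rewrite ler_wpM2r ?sqr_ge0 // ler_expR ler_norm.
- have e1 : 1 <= expR `|x| by rewrite -expR0 ler_expR.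
  have : expR x <= 1 by rewrite -expR0 ler_expR; lra.
  have : x ^+ 2 <= expR `|x| * x ^+ 2 by rewrite ler_peMl ?sqr_ge0.
  nra.
Qed.

Lemma wavg_norm_le (I : finType) (p x : I -> R) (M : R) :
  (forall j, 0 <= p j) -> \sum_j p j = 1 -> (forall j, `|x j| <= M) ->
  `|\sum_j p j * x j| <= M.
Proof.
move=> p_ge0 p_sum1 x_le; apply: le_trans (ler_norm_sum _ _ _) _.
rewrite -[M]mul1r -p_sum1 mulr_suml; apply: ler_sum => j _.
by rewrite normrM ger0_norm // ler_wpM2l.
Qed.

End RealInequalities.

Section Vectors.
Variables (R : realType) (n : nat).
Implicit Types (u w x : 'cV[R]_n).

Lemma dotmxE u w : (u^T *m w) ord0 ord0 = \sum_i u i ord0 * w i ord0.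
Proof. by rewrite mxE; apply: eq_bigr => i _; rewrite mxE. Qed.

Lemma dotmx_norm_le u w (M : R) :
  (forall i, `|u i ord0| <= 1) -> (forall i, `|w i ord0| <= M) ->
  `|(u^T *m w) ord0 ord0| <= n%:R * M.
Proof.
move=> u_le w_le; rewrite dotmxE; apply: le_trans (ler_norm_sum _ _ _) _.
rewrite mulr_natl -[n in _ *+ n]card_ord -sumr_const; apply: ler_sum => i _.
by rewrite normrM -[M]mul1r ler_pM.
Qed.

Lemma unit_col_entry_le1 u i : u^T *m u = 1%:M -> `|u i ord0| <= 1.
Proof.
move=> /(congr1 (fun A : 'M[R]_1 => A ord0 ord0)); rewrite dotmxE mxE /= => u_sum.
rewrite -(expr_le1 (n := 2)) // real_normK ?num_real //.
apply: le_trans (_ : _ <= \sum_j u j ord0 * u j ord0) _; last by rewrite u_sum.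
by rewrite (bigD1 i) //= expr2 lerDl sumr_ge0 // => j _; rewrite -expr2 sqr_ge0.
Qed.

Lemma vnorm_entry_le x i : `|x i ord0| <= vnorm x.
Proof.
rewrite /vnorm -sqrtr_sqr ler_wsqrtr // (bigD1 i) //= lerDl.
by rewrite sumr_ge0 // => j _; rewrite sqr_ge0.
Qed.

Lemma vnorm_gt0 x : x != 0 -> 0 < vnorm x.
Proof.
apply: contraNT; rewrite -leNgt => x_le0; apply/eqP/matrixP => i j.
rewrite (ord1 j) mxE; apply/eqP; rewrite -normr_le0.
exact: le_trans (vnorm_entry_le x i) x_le0.
Qed.

Lemma tr_mulmx_self x : x^T *m x = (vnorm x ^+ 2)%:M.
Proof.
rewrite /vnorm sqr_sqrtr ?sumr_ge0 // => [|i _]; last exact: sqr_ge0.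
apply/matrixP => i j; rewrite !ord1 dotmxE !mxE /= mulr1n.
by apply: eq_bigr => l _; rewrite expr2.
Qed.

Lemma frob_mul_tr m (g : 'cV[R]_m) x : frob (g *m x^T) = vnorm g * vnorm x.
Proof.
rewrite /frob /vnorm -sqrtrM ?sumr_ge0 // => [|i _]; last exact: sqr_ge0.
congr Num.sqrt; rewrite mulr_suml; apply: eq_bigr => i _.
by rewrite mulr_sumr; apply: eq_bigr => j _; rewrite !mxE big_ord1 !mxE exprMn.
Qed.

Lemma normalized_entry_le (a : R) x i :
  `|(if x == 0 then 0 else a / vnorm x) * x i ord0| <= `|a|.
Proof.
case: ifPn => [_|x_ne0]; first by rewrite mul0r normr0.
have x_gt0 := vnorm_gt0 x_ne0.
rewrite normrM normf_div (gtr0_norm x_gt0) mulrAC ler_pdivrMr //.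
by rewrite ler_wpM2l ?vnorm_entry_le.
Qed.

End Vectors.

Section Spectral.
Variables (F : comNzRingType) (n m : nat).

Lemma orthonormal_left_eigvec (A : 'M[F]_n) (lam : 'I_m -> F)
    (v : 'I_m -> 'cV[F]_n) :
  A = \sum_l lam l *: (v l *m (v l)^T) ->
  (forall k l, (v k)^T *m v l = (k == l)%:R%:M) ->
  forall k, (v k)^T *m A = lam k *: (v k)^T.
Proof.
move=> -> v_orth k; rewrite mulmx_sumr (bigD1 k) //= big1 ?addr0 => [|l lk].
  by rewrite -scalemxAr mulmxA v_orth eqxx mul_scalar_mx scale1r.
by rewrite -scalemxAr mulmxA v_orth eq_sym (negPf lk) mul_scalar_mx !scale0r scaler0.
Qed.

End Spectral.

Section Softmax.
Variables (R : realType) (V : nat).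
Implicit Types (z dl x : 'cV[R]_V) (i j k c : 'I_V).

Lemma sum_expR_gt0 z i : 0 < \sum_j expR (z j ord0).
Proof.
rewrite (bigD1 i) //= ltr_pwDl ?expR_gt0 //.
by rewrite sumr_ge0 // => j _; rewrite expR_ge0.
Qed.

Lemma xent_onehotE z c :
  xent z (delta_mx c ord0) = ln (\sum_j expR (z j ord0)) - z c ord0.
Proof.
rewrite /xent (bigD1 c) //= big1 => [|j /negPf jc]; last by rewrite mxE jc mul0r.
rewrite !mxE !eqxx mul1r addr0 ln_div ?posrE ?expR_gt0 ?(sum_expR_gt0 z c) //.
by rewrite expRK opprB.
Qed.

Lemma sum_expR_shift z k (s : R) :
  \sum_j expR ((z + s *: delta_mx k ord0) j ord0)
  = \sum_j expR (z j ord0) + expR (z k ord0) * (expR s - 1).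
Proof.
rewrite (bigD1 k) //= [in RHS](bigD1 k) //= !mxE !eqxx mulr1 expRD.
rewrite (eq_bigr (fun j => expR (z j ord0))) => [|j /negPf jk]; last first.
  by rewrite !mxE jk mulr0 addr0.
ring.
Qed.

Lemma grad_z_onehot z c : grad_z (delta_mx c ord0) z = softmax z - delta_mx c ord0.
Proof.
apply/matrixP => k j; rewrite (ord1 j) !mxE.
set T := \sum_j expR (z j ord0); set b := expR (z k ord0).
have T_gt0 : 0 < T := sum_expR_gt0 z k.
have -> : (fun s => xent (z + s *: delta_mx k ord0) (delta_mx c ord0))
    = (fun s => ln (T + b * (expR s - 1)) - (z c ord0 + s * (c == k)%:R)).
  apply/funext => s; rewrite xent_onehotE sum_expR_shift !mxE.
  by rewrite eqxx andbT.
set ck : R := (c == k)%:R.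
have dT : is_derive (0 : R) 1 (fun s : R => T + b * (expR s - 1)) b.
  apply: is_derive_eq (is_deriveD (is_derive_cst T (0 : R) (1 : R))
    (is_deriveZ b (is_deriveB (is_derive_expR (0 : R))
      (is_derive_cst (1 : R) (0 : R) (1 : R))))) _.
  by rewrite add0r subr0 expR0; exact: mulr1.
have dln : is_derive (0 : R) 1 (@ln R \o (fun s => T + b * (expR s - 1))) (T^-1 * b).
  by apply: is_derive1_comp; rewrite expR0 subrr mulr0 addr0; exact: is_derive1_ln.
have dlin : is_derive (0 : R) 1 (fun s : R => z c ord0 + s * ck) ck.
  apply: is_derive_eq (is_deriveD (is_derive_cst (z c ord0) (0 : R) (1 : R))
    (is_deriveM (is_derive_id (0 : R) (1 : R)) (is_derive_cst ck (0 : R) (1 : R)))) _.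
  by rewrite scaler0 !add0r; exact: mulr1.
have [_ dE] := is_deriveB dln dlin.
by rewrite derive1E dE mulrC eqxx andbT eq_sym.
Qed.

Lemma softmax_gt0 z i : 0 < softmax z i ord0.
Proof. by rewrite mxE divr_gt0 ?expR_gt0 // (sum_expR_gt0 z i). Qed.

Lemma softmax_sum1 z i : \sum_j softmax z j ord0 = 1.
Proof.
under eq_bigr => j _ do rewrite mxE.
by rewrite -mulr_suml divff // gt_eqF // (sum_expR_gt0 z i).
Qed.

Lemma softmax_le1 z i : softmax z i ord0 <= 1.
Proof.
rewrite -(softmax_sum1 z i) (bigD1 i) //= lerDl.
by apply: sumr_ge0 => j _; exact: ltW (softmax_gt0 z j).
Qed.

Lemma softmax_wavg_norm_le z (x : 'I_V -> R) (M : R) i :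
  (forall j, `|x j| <= M) -> `|\sum_j softmax z j ord0 * x j| <= M.
Proof.
by apply: wavg_norm_le (softmax_sum1 z i) => j; exact: ltW (softmax_gt0 z j).
Qed.

Lemma softmaxD z dl i :
  softmax (z + dl) i ord0 = softmax z i ord0 * expR (dl i ord0) /
     \sum_j softmax z j ord0 * expR (dl j ord0).
Proof.
have T_gt0 := sum_expR_gt0 z i.
rewrite !mxE; under eq_bigr => j _ do rewrite !mxE expRD.
under [X in _ = _ / X]eq_bigr => j _ do rewrite mxE mulrAC.
rewrite -mulr_suml.
have S_gt0 : 0 < \sum_j expR (z j ord0) * expR (dl j ord0).
  rewrite (bigD1 i) //= ltr_pwDl ?mulr_gt0 ?expR_gt0 //.
  by apply: sumr_ge0 => j _; rewrite mulr_ge0 ?expR_ge0.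
by rewrite expRD; field; rewrite !gt_eqF ?expR_gt0.
Qed.

Lemma Hz_mulmx z x i :
  (Hz z *m x) i ord0 = softmax z i ord0 * x i ord0
     - softmax z i ord0 * \sum_j softmax z j ord0 * x j ord0.
Proof.
rewrite /Hz mulmxBl mul_diag_mx -mulmxA !mxE big_ord1 !mxE.
by congr (_ - _ * _); apply: eq_bigr => j _; rewrite !mxE.
Qed.

Lemma Hz_quad_le z x : (x^T *m (Hz z *m x)) ord0 ord0 <= (x^T *m x) ord0 ord0.
Proof.
rewrite !dotmxE; under eq_bigr => i _ do rewrite Hz_mulmx.
set m := \sum_j softmax z j ord0 * x j ord0.
have -> : \sum_i x i ord0 * (softmax z i ord0 * x i ord0 - softmax z i ord0 * m)
    = \sum_i softmax z i ord0 * (x i ord0 * x i ord0)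
      - m * \sum_j softmax z j ord0 * x j ord0.
  by rewrite mulr_sumr -sumrB; apply: eq_bigr => i _; ring.
apply: le_trans (_ : _ <= \sum_i softmax z i ord0 * (x i ord0 * x i ord0)) _.
  by rewrite gerBl; exact: sqr_ge0 m.
apply: ler_sum => i _; rewrite ler_piMl ?softmax_le1 //.
by rewrite -expr2 sqr_ge0.
Qed.

Lemma onehot_residual_le1 z c i : `|(softmax z - delta_mx c ord0) i ord0| <= 1.
Proof.
have := softmax_gt0 z i; have := softmax_le1 z i.
rewrite !mxE eqxx andbT; case: (i == c) => /= p_le1 p_gt0.
  by rewrite ler_norml; lra.
by rewrite subr0 ger0_norm; lra.
Qed.

Definition softmax_rem z dl := softmax (z + dl) - softmax z - Hz z *m dl.

Definition softmax_rem_const (B : R) :=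
  expR B * (expR B + 2 + expR B * (1 + 2 * B)).

Lemma softmax_rem_const_ge0 (B : R) : 0 <= B -> 0 <= softmax_rem_const B.
Proof.
by move=> B_ge0; rewrite /softmax_rem_const !(mulr_ge0, addr_ge0) ?expR_ge0.
Qed.

Lemma softmax_remE z dl i : softmax_rem z dl i ord0 =
  softmax (z + dl) i ord0 - softmax z i ord0 - (Hz z *m dl) i ord0.
Proof. by rewrite !mxE. Qed.

Lemma softmax_expR_wavg_ge z dl (B : R) i :
  (forall j, `|dl j ord0| <= B) ->
  expR (- B) <= \sum_j softmax z j ord0 * expR (dl j ord0).
Proof.
move=> dl_le; rewrite -[expR (- B)]mul1r -(softmax_sum1 z i) mulr_suml.
apply: ler_sum => j _; apply: ler_wpM2l; first exact: ltW (softmax_gt0 z j).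
by rewrite ler_expR; have := dl_le j; rewrite ler_norml; lra.
Qed.

Lemma softmax_expR_wavg_rem_le z dl (D B : R) i :
  D <= B -> (forall j, `|dl j ord0| <= D) ->
  `|\sum_j softmax z j ord0 * expR (dl j ord0) - 1
    - \sum_j softmax z j ord0 * dl j ord0| <= expR B * D ^+ 2.
Proof.
move=> DB dl_le.
rewrite -{1}(softmax_sum1 z i) -!sumrB.
under eq_bigr => j _ do rewrite -[X in _ - X - _]mulr1 -!mulrBr.
by move: (softmax_wavg_norm_le z i (fun j => expR_remainder_le (dl_le j) DB)).
Qed.

Lemma softmax_rem_numerator_le (ra rS m a D B E : R) :
  `|ra| <= E * D ^+ 2 -> `|rS| <= E * D ^+ 2 -> `|m| <= D -> `|a| <= D -> D <= B ->
  `|ra - m * a + m ^+ 2 - rS * (1 + a - m)| <= (E + 2 + E * (1 + 2 * B)) * D ^+ 2.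
Proof.
move=> ra_le rS_le m_le a_le DB.
have D_ge0 : 0 <= D := le_trans (normr_ge0 m) m_le.
have ma_le : `|m * a| <= D ^+ 2 by rewrite normrM expr2 ler_pM.
have m2_le : `|m ^+ 2| <= D ^+ 2 by rewrite normrX lerXn2r ?nnegrE.
have lin_le : `|1 + a - m| <= 1 + 2 * B.
  apply: le_trans (ler_normB _ _) _.
  apply: le_trans (lerD (ler_normD _ _) (lexx _)) _.
  by rewrite normr1; lra.
have rS_lin := ler_pM (normr_ge0 _) (normr_ge0 _) rS_le lin_le.
apply: le_trans (ler_normB _ _) _; rewrite normrM.
apply: le_trans (lerD (ler_normD _ _) rS_lin) _.
apply: le_trans (lerD (lerD (ler_normB _ _) m2_le) (lexx _)) _.
lra.
Qed.

Lemma softmax_rem_le z dl (D B : R) i :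
  D <= B -> (forall j, `|dl j ord0| <= D) ->
  `|softmax_rem z dl i ord0| <= softmax_rem_const B * D ^+ 2.
Proof.
move=> DB dl_le; rewrite softmax_remE softmaxD Hz_mulmx.
have rS_le := softmax_expR_wavg_rem_le z i DB dl_le.
have S_ge := softmax_expR_wavg_ge z i (fun j => le_trans (dl_le j) DB).
set p := softmax z.
set S := \sum_j p j ord0 * expR (dl j ord0) in rS_le S_ge *.
set m := \sum_j p j ord0 * dl j ord0 in rS_le *.
set a := dl i ord0; set E := expR B in rS_le *.
have S_gt0 : 0 < S := lt_le_trans (expR_gt0 _) S_ge.
have S_inv_le : S^-1 <= E by rewrite -[E]invrK -expRN lef_pV2 ?posrE ?expR_gt0.
have m_le : `|m| <= D := softmax_wavg_norm_le z i dl_le.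
have a_le : `|a| <= D := dl_le i.
(* With [e^a = 1 + a + ra] and [S = 1 + m + rS] the remainder is [p_i N / S]. *)
set ra := expR a - 1 - a; set rS := S - 1 - m in rS_le.
set N := ra - m * a + m ^+ 2 - rS * (1 + a - m).
have -> : p i ord0 * expR a / S - p i ord0 - (p i ord0 * a - p i ord0 * m)
    = p i ord0 * N / S by rewrite /N /ra /rS; field; rewrite gt_eqF.
have N_le : `|N| <= (E + 2 + E * (1 + 2 * B)) * D ^+ 2.
  exact: softmax_rem_numerator_le (expR_remainder_le a_le DB) rS_le m_le a_le DB.
have p_ge0 : 0 <= p i ord0 := ltW (softmax_gt0 z i).
rewrite /softmax_rem_const -/E !normrM normfV (ger0_norm p_ge0) (gtr0_norm S_gt0).
have pN_le : p i ord0 * `|N| <= (E + 2 + E * (1 + 2 * B)) * D ^+ 2.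
  by rewrite -[X in _ <= X]mul1r ler_pM // softmax_le1.
apply: le_trans (ler_pM _ _ pN_le S_inv_le) _.
- by rewrite mulr_ge0.
- by rewrite invr_ge0 ltW.
- by rewrite mulrC mulrA.
Qed.

End Softmax.

Section SamStep.
Variables (R : realType) (V d : nat) (phi : 'cV[R]_d) (c : 'I_V).
Local Notation y := (delta_mx c ord0).

Lemma gradF_onehot W : gradF phi y W = gvec phi y W *m phi^T.
Proof. by rewrite /gradF grad_z_onehot. Qed.

Lemma sam_step_logits eta rho W :
  let g := gvec phi y W in
  let rhot := if g == 0 then 0 else rho * vnorm phi / vnorm g in
  sam_step phi y eta rho W *m phi
  = W *m phi - (eta * vnorm phi ^+ 2) *: (softmax (W *m phi + rhot *: g) - y).
Proof.
move=> g rhot.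
have gradF_mulmx X : gradF phi y X *m phi = vnorm phi ^+ 2 *: gvec phi y X.
  by rewrite gradF_onehot -mulmxA tr_mulmx_self mul_mx_scalar.
have pert : (W + (if g == 0 then 0 else (rho / frob (gradF phi y W)) *: gradF phi y W))
    *m phi = W *m phi + rhot *: g.
  rewrite mulmxDl /rhot; case: ifPn => g_ne0; first by rewrite mul0mx scale0r.
  rewrite -scalemxAl gradF_mulmx gradF_onehot frob_mul_tr -/g scalerA.
  congr (_ + _ *: _).
  have [->|phi_ne0] := eqVneq (vnorm phi) 0; first by rewrite expr2 !(mulr0, mul0r).
  by field; rewrite phi_ne0 andbT gt_eqF ?vnorm_gt0.
rewrite /sam_step /= mulmxBl -scalemxAl gradF_mulmx scalerA.
by rewrite {1}/gvec pert.
Qed.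
End SamStep.
Section SamResidual.
Variables (R : realType) (V : nat) (z v : 'cV[R]_V) (c : 'I_V) (lam : R).
Hypotheses (v_unit : v^T *m v = 1%:M) (v_eig : v^T *m Hz z = lam *: v^T).
Local Notation y := (delta_mx c ord0).
Local Notation g := (softmax z - y).
Local Notation dotv x := ((v^T *m x) ord0 ord0).
Implicit Types (x dl : 'cV[R]_V).

Lemma dotvZ a x : dotv (a *: x) = a * dotv x.
Proof. by rewrite -scalemxAr mxE. Qed.

Lemma dotv_softmax_shift dl :
  dotv (softmax (z + dl) - y) = dotv g + lam * dotv dl + dotv (softmax_rem z dl).
Proof.
have -> : softmax (z + dl) - y = g + Hz z *m dl + softmax_rem z dl.
  by apply/matrixP => i j; rewrite !mxE; ring.
by rewrite 2!mulmxDr mulmxA v_eig -scalemxAl 2!mxE [X in _ + X + _]mxE.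
Qed.

Lemma dotv_rem_le dl (D B : R) :
  D <= B -> (forall j, `|dl j ord0| <= D) ->
  `|dotv (softmax_rem z dl)| <= V%:R * softmax_rem_const B * D ^+ 2.
Proof.
move=> DB dl_le; rewrite -mulrA; apply: dotmx_norm_le => i.
  exact: unit_col_entry_le1.
exact: softmax_rem_le.
Qed.

Lemma Hz_eigval_le1 : lam <= 1.
Proof.
have := Hz_quad_le z v.
by rewrite mulmxA v_eig -scalemxAl v_unit !mxE eqxx mulr1.
Qed.

Lemma sam_logit_residualE (t s : R) :
  let gq := softmax (z + t *: g) - y in
  dotv (softmax (z - s *: gq) - y) - (1 - s * (lam + t * lam ^+ 2)) * dotv g
  = dotv (softmax_rem z ((- s) *: gq)) - s * (lam * dotv (softmax_rem z (t *: g))).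
Proof.
have residual_id (e a1 a2 : R) :
  e + lam * (- s * (e + lam * (t * e) + a1)) + a2 - (1 - s * (lam + t * lam ^+ 2)) * e
  = a2 - s * (lam * a1) by ring.
by rewrite /= -scaleNr dotv_softmax_shift dotvZ dotv_softmax_shift dotvZ residual_id.
Qed.

Lemma sam_logit_residual_le (t s D1 D2 B : R) :
  `|lam| <= 1 -> D1 <= B -> D2 <= B ->
  (forall j, `|t * g j ord0| <= D1) -> `|s| <= D2 ->
  `|dotv (softmax (z - s *: (softmax (z + t *: g) - y)) - y)
    - (1 - s * (lam + t * lam ^+ 2)) * dotv g|
  <= V%:R * softmax_rem_const B * (`|s| * D1 ^+ 2 + D2 ^+ 2).
Proof.
move=> lam_le1 D1B D2B pert_le s_le.
rewrite sam_logit_residualE; set K := V%:R * softmax_rem_const B.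
have a1_le : `|lam * dotv (softmax_rem z (t *: g))| <= K * D1 ^+ 2.
  rewrite normrM -[X in _ <= X]mul1r ler_pM //.
  by apply: dotv_rem_le => // j; rewrite mxE.
have a2_le :
    `|dotv (softmax_rem z ((- s) *: (softmax (z + t *: g) - y)))| <= K * D2 ^+ 2.
  apply: dotv_rem_le => // j.
  by rewrite mxE normrM normrN -[D2]mulr1 ler_pM ?onehot_residual_le1.
apply: le_trans (ler_normB _ _) _.
by rewrite normrM mulrDr mulrCA addrC lerD ?ler_wpM2l.
Qed.

End SamResidual.

Lemma sam_radii_sqr_le (R : realType) (mu kappa eta rho : R) :
  0 <= mu -> 0 <= kappa -> `|rho| <= kappa * Num.sqrt `|eta| ->
  `|eta * mu| * (`|rho| * Num.sqrt mu) ^+ 2 + `|eta * mu| ^+ 2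
  <= mu ^+ 2 * (kappa ^+ 2 + 1) * eta ^+ 2.
Proof.
move=> mu_ge0 kappa_ge0 rho_le; rewrite normrM (ger0_norm mu_ge0).
have rho2_le : rho ^+ 2 <= kappa ^+ 2 * `|eta|.
  rewrite -real_normK ?num_real // -(sqr_sqrtr (normr_ge0 eta)) -exprMn.
  by rewrite lerXn2r ?nnegrE ?mulr_ge0 ?sqrtr_ge0.
have eta2 : `|eta| ^+ 2 = eta ^+ 2 by rewrite real_normK ?num_real.
rewrite !exprMn sqr_sqrtr // real_normK ?num_real //.
have := ler_wpM2l (mulr_ge0 (mulr_ge0 (normr_ge0 eta) mu_ge0) mu_ge0) rho2_le.
rewrite -eta2; nra.
Qed.

Theorem corollary1 (R : realType) (V : nat) (mu kappa : R) :
  0 < mu -> 0 <= kappa ->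
  exists C : R, 0 < C /\
  forall (d : nat) (phi : 'cV[R]_d), vnorm phi ^+ 2 = mu ->
  forall (y : 'cV[R]_V), onehot y ->
  forall eta rho : R, 0 < `|eta| -> `|eta| <= 1 ->
  `|rho| <= kappa * Num.sqrt `|eta| ->
  forall (W : 'M[R]_(V, d)) (lam : 'I_V.-1 -> R) (v : 'I_V.-1 -> 'cV[R]_V),
  Hz (W *m phi) = \sum_(k < V.-1) lam k *: (v k *m (v k)^T) ->
  (forall k, 0 < lam k) ->
  (forall k l, (v k)^T *m v l = (k == l)%:R%:M) ->
  let g := gvec phi y W in
  let g1 := gvec phi y (sam_step phi y eta rho W) in
  let rhot := if g == 0 then 0 else rho * Num.sqrt mu / vnorm g in
  forall k : 'I_V.-1,
    let e := ((v k)^T *m g) ord0 ord0 in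
    let r := ((v k)^T *m g1) ord0 ord0
             - (1 - eta * mu * (lam k + rhot * lam k ^+ 2)) * e in
    `|r| <= C * eta ^+ 2.
Proof.
move=> mu_gt0 kappa_ge0; have mu_ge0 := ltW mu_gt0.
pose B := mu + kappa * Num.sqrt mu; pose K := V%:R * softmax_rem_const B.
have K_ge0 : 0 <= K.
  apply: mulr_ge0 (ler0n _ _) (softmax_rem_const_ge0 _).
  by rewrite addr_ge0 ?mulr_ge0 ?sqrtr_ge0.
exists (K * (mu ^+ 2 * (kappa ^+ 2 + 1)) + 1).
split=> [|d phi phi_mu y [c ->] eta rho _ eta_le1 rho_le W lam v].
  by rewrite ltr_pwDr // mulr_ge0 // mulr_ge0 ?addr_ge0 ?sqr_ge0.
move=> H_spec lam_gt0 v_orth g g1 rhot k; cbv zeta.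
have sqrt_mu : Num.sqrt mu = vnorm phi by rewrite -phi_mu sqrtr_sqr ger0_norm ?sqrtr_ge0.
have v_eig := orthonormal_left_eigvec H_spec v_orth k.
have v_unit : (v k)^T *m v k = 1%:M by rewrite v_orth eqxx.
have lam_le1 : `|lam k| <= 1 by rewrite ger0_norm ?(Hz_eigval_le1 v_unit v_eig) // ltW.
have rho_le_kappa : `|rho| <= kappa.
  by apply: le_trans rho_le _; rewrite ler_piMr // -sqrtr1 ler_wsqrtr.
have rhot_le j : `|rhot * g j ord0| <= `|rho| * Num.sqrt mu.
  by rewrite -[Num.sqrt mu]ger0_norm ?sqrtr_ge0 // -normrM normalized_entry_le.
rewrite /g1 /gvec sam_step_logits -/g phi_mu -sqrt_mu -/rhot.
apply: le_trans (sam_logit_residual_le (B := B) v_unit v_eig lam_le1 _ _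
  rhot_le (lexx _)) _.
- by rewrite /B ler_wpDl // ler_wpM2r ?sqrtr_ge0.
- by rewrite normrM (ger0_norm mu_ge0) /B ler_wpDr ?mulr_ge0 ?sqrtr_ge0 // ler_piMl.
apply: le_trans (_ : _ <= K * (mu ^+ 2 * (kappa ^+ 2 + 1)) * eta ^+ 2) _.
  by rewrite -[X in _ <= X]mulrA ler_wpM2l // sam_radii_sqr_le.
by rewrite ler_wpM2r ?sqr_ge0 ?lerDl.
Qed.
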